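(* Up to multiplication by a positive integer, every basic weight of a basic system of type $B$ is one of the following (coordinates $\lambda_k=\langle\lambda,e_k\rangle$): (1) $(B_2,1,1)$: $(0,1)$; (2) $(B_2,1,2)$: $(\tfrac12,\tfrac12)$, $(-\tfrac12,\tfrac12)$; (3) $(B_2,2,1)$: $(1,0)$, $(0,-1)$; (4) $(B_2,2,2)$: $(\tfrac12,-\tfrac12)$; (5) $(B_3,2,2)$: $(1,0,1)$, $(0,-1,1)$; (6) $(B_3,2,3)$: $(\tfrac12,-\tfrac12,\tfrac12)$; (7) $(B_3,3,2)$: $(1,0,-1)$; (8) $(B_4,3,3)$: $(1,0,-1,1)$.
   Context: $B_n$ is realized in $\mathbb R^n$ with orthonormal basis $e_1,\dots,e_n$ and standard inner product, simple roots $\alpha_k=e_k-e_{k+1}$ ($k<n$), $\alpha_n=e_n$. Let $W$ be the Weyl group, $\alpha^\vee=2\alpha/\langle\alpha,\alpha\rangle$. A weight is integral if $\langle\lambda,\alpha^\vee\rangle\in\mathbb Z$ for all roots $\alpha$; $\overline\lambda$ is the dominant weight in $W\lambda$. For $I=\Delta\setminus\{\alpha_i\}$, $J=\Delta\setminus\{\alpha_j\}$, a basic weight of $(\Phi,i,j)$ is an integral $\lambda$ with $\langle\lambda,\alpha^\vee\rangle\in\mathbb Z_{>0}$ for all $\alpha\in I$ and $\{\alpha\in\Delta:\langle\overline\lambda,\alpha\rangle=0\}=J$; $(\Phi,i,j)$ is a basic system if it has a basic weight. *)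

From mathcomp Require Import all_boot all_order all_algebra.
Set Implicit Arguments. Unset Strict Implicit. Unset Printing Implicit Defensive.
Import Order.TTheory GRing.Theory Num.Theory.
Local Open Scope ring_scope.

Section BRoot.
Variables (R : realFieldType) (n : nat).
Local Notation vec := 'rV[R]_n.

Definition ip (u v : vec) : R := \sum_(k < n) u 0 k * v 0 k.

(* standard basis vector e_k (0-based index) *)
Definition ev (k : 'I_n) : vec := \row_(l < n) (if l == k then 1 else 0).

Definition rootB (a : vec) : Prop :=
  (exists (k l : 'I_n) (s t : bool), k != l /\
     a = (-1) ^+ s *: ev k + (-1) ^+ t *: ev l) \/
  (exists (k : 'I_n) (s : bool), a = (-1) ^+ s *: ev k).

Definition coroot (a : vec) : vec := (2 / ip a a) *: a.

Definition is_int (x : R) : Prop := exists z : int, x = z%:~R.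
Definition is_posint (x : R) : Prop := exists m : nat, (0 < m)%N /\ x = m%:R.

Definition integral (l : vec) : Prop := forall a, rootB a -> is_int (ip l (coroot a)).

Definition refl (a v : vec) : vec := v - ip v (coroot a) *: a.

Definition in_orbit (lam mu : vec) : Prop :=
  exists s : seq vec, (forall a, a \in s -> rootB a) /\ mu = foldr refl lam s.
End BRoot.

(* simple roots, 1-based index k in 1..n:
   alpha_k = e_k - e_(k+1) (k < n), alpha_n = e_n *)
Definition simple_root (R : realFieldType) (n k : nat) : 'rV[R]_n :=
  if (k < n)%N then
    \row_(l < n) (if (l == k.-1 :> nat) then 1 else if (l == k :> nat) then -1 else 0)
  else \row_(l < n) (if (l == n.-1 :> nat) then 1 else 0).

Definition dominant (R : realFieldType) (n : nat) (mu : 'rV[R]_n) : Prop :=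
  forall k, (1 <= k <= n)%N -> 0 <= ip mu (simple_root R n k).

(* basic weight of (B_n, i, j); I = Delta \ {alpha_i}, J = Delta \ {alpha_j};
   overline lambda is the (unique) dominant element of W lambda *)
Definition basic_weight (R : realFieldType) (n i j : nat) (lam : 'rV[R]_n) : Prop :=
  integral lam /\
  (forall k, (1 <= k <= n)%N -> k != i ->
      is_posint (ip lam (coroot (simple_root R n k)))) /\
  (exists mu, in_orbit lam mu /\ dominant mu /\
     forall k, (1 <= k <= n)%N ->
       (ip mu (simple_root R n k) = 0 <-> k != j)).

Definition basic_system (R : realFieldType) (n i j : nat) : Prop :=
  exists lam : 'rV[R]_n, @basic_weight R n i j lam.

Definition vec_of (R : realFieldType) (n : nat) (s : seq R) : 'rV[R]_n :=
  \row_(k < n) nth 0 s k.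

Definition listedB (R : realFieldType) (n i j : nat) (mu : 'rV[R]_n) : Prop :=
  let h : R := 2^-1 in
  ((n, i, j) = (2, 1, 1)%N /\ mu = vec_of n [:: 0; 1]
   \/ (n, i, j) = (2, 1, 2)%N /\ (mu = vec_of n [:: h; h] \/ mu = vec_of n [:: -h; h])
   \/ (n, i, j) = (2, 2, 1)%N /\ (mu = vec_of n [:: 1; 0] \/ mu = vec_of n [:: 0; -1])
   \/ (n, i, j) = (2, 2, 2)%N /\ mu = vec_of n [:: h; -h]
   \/ (n, i, j) = (3, 2, 2)%N /\ (mu = vec_of n [:: 1; 0; 1] \/ mu = vec_of n [:: 0; -1; 1])
   \/ (n, i, j) = (3, 2, 3)%N /\ mu = vec_of n [:: h; -h; h]
   \/ (n, i, j) = (3, 3, 2)%N /\ mu = vec_of n [:: 1; 0; -1]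
   \/ (n, i, j) = (4, 3, 3)%N /\ mu = vec_of n [:: 1; 0; -1; 1]).

(* Let mu be the dominant element of W lam.  Its zero set J = Delta \ {alpha_j}
   forces mu = a (1, ..., 1, 0, ..., 0) with j ones and a > 0.  Reflections in
   roots of B_n permute the coordinates up to sign, so lam = a s for a sign
   vector s in {-1, 0, 1}^n with exactly j nonzero entries.  For k <> i the
   pairing of lam with alpha_k^vee is positive, i.e. s_k > s_(k+1) (reading
   s_(n+1) = 0); a strictly decreasing run in {-1, 0, 1} has length at most 3,
   which forces n <= 4, and a finite search leaves exactly the sign patterns of
   the table.  Finally integrality of lam on a short root e_k with s_k <> 0
   gives 2a in Z, and on a long root e_k + e_l with s_l = 0 gives a in Z. *)

From mathcomp Require Import all_boot all_order all_algebra.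
From mathcomp Require Import perm ring zify.
(* Imported last, so that [in_orbit] is the Weyl orbit and not the lemma of fingraph. *)
Set Implicit Arguments. Unset Strict Implicit. Unset Printing Implicit Defensive.
Import Order.TTheory GRing.Theory Num.Theory.
Local Open Scope ring_scope.

Section InnerProduct.
Variables (R : realFieldType) (n : nat).
Local Notation vec := 'rV[R]_n.

Lemma ipC (u v : vec) : ip u v = ip v u.
Proof. by apply: eq_bigr => k _; rewrite mulrC. Qed.

Lemma ipDr (u v w : vec) : ip u (v + w) = ip u v + ip u w.
Proof. by rewrite /ip -big_split; apply: eq_bigr => k _; rewrite mxE mulrDr. Qed.

Lemma ipZr (u v : vec) c : ip u (c *: v) = c * ip u v.
Proof. by rewrite /ip mulr_sumr; apply: eq_bigr => k _; rewrite mxE mulrCA. Qed.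

Lemma ipDl (u v w : vec) : ip (u + v) w = ip u w + ip v w.
Proof. by rewrite ipC ipDr !(ipC w). Qed.

Lemma ipZl (u v : vec) c : ip (c *: u) v = c * ip u v.
Proof. by rewrite ipC ipZr ipC. Qed.

Lemma ip_evr (u : vec) k : ip u (ev R k) = u 0 k.
Proof.
rewrite /ip (bigD1 k) //= big1 => [|l /negbTE lk]; rewrite !mxE ?eqxx ?lk.
  by rewrite mulr1 addr0.
by rewrite mulr0.
Qed.

Lemma ip_gt0 (u : vec) : u != 0 -> 0 < ip u u.
Proof.
move=> u0; rewrite lt_def sumr_ge0 ?andbT => [|k _]; last by rewrite -expr2 sqr_ge0.
apply: contra u0; rewrite psumr_eq0 => [/allP u0|k _]; last by rewrite -expr2 sqr_ge0.
apply/eqP/rowP => k; rewrite mxE.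
by move: (u0 k (mem_index_enum k)); rewrite mulf_eq0 orbb => /eqP.
Qed.

Lemma ip_coroot_gt0 (u a : vec) : a != 0 -> (0 < ip u (coroot a)) = (0 < ip u a).
Proof. by move=> a0; rewrite ipZr pmulr_rgt0 // divr_gt0 ?ip_gt0. Qed.

End InnerProduct.

Section Coord.
Variables (R : realFieldType) (n : nat).
Local Notation vec := 'rV[R]_n.

(* Coordinates indexed by nat, with value 0 beyond n: then alpha_n = e_n behaves
   like e_n - e_(n+1), and all simple roots are treated uniformly. *)
Definition coord (v : vec) (k : nat) : R := oapp (v 0) 0 (insub k).

Lemma coord_ord (v : vec) (k : 'I_n) : coord v k = v 0 k.
Proof. by rewrite /coord valK. Qed.

Lemma coord_default (v : vec) k : (n <= k)%N -> coord v k = 0.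
Proof. by move=> nk; rewrite /coord insubN // -leqNgt. Qed.

Lemma ip_indicator (v : vec) m : ip v (\row_(l < n) (l == m :> nat)%:R) = coord v m.
Proof.
rewrite /ip /coord; case: insubP => [l _ <- | ]/= => [|mn].
  rewrite (bigD1 l) //= big1 => [|k /negbTE kl]; rewrite mxE ?eqxx ?mulr1 ?addr0 //.
  by rewrite (inj_eq val_inj) kl mulr0.
rewrite big1 // => k _; rewrite mxE.
have /negbTE -> : (k != m :> nat) by apply: contraNneq mn => <-.
by rewrite mulr0.
Qed.

Lemma simple_rootE k : (0 < k <= n)%N ->
  simple_root R n k = \row_l (l == k.-1 :> nat)%:R - \row_l (l == k :> nat)%:R.
Proof.
case/andP=> k0 kn; apply/rowP => l; rewrite /simple_root !mxE.
have k1k : (k.-1 == k) = false by apply/eqP; lia.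
have [kn'|nk] := ltnP k n; rewrite mxE.
  have [->|_] := eqVneq (l : nat) k.-1; first by rewrite k1k subr0.
  by rewrite sub0r; case: (l == k :> nat); rewrite ?oppr0.
have ln : (l == k :> nat) = false by apply/eqP; have := ltn_ord l; lia.
have -> : k.-1 = n.-1 by lia.
by rewrite ln subr0; case: (l == n.-1 :> nat).
Qed.

Lemma ip_simple_root (v : vec) k : (0 < k <= n)%N ->
  ip v (simple_root R n k) = coord v k.-1 - coord v k.
Proof. by move=> kn; rewrite simple_rootE // ipDr -scaleN1r ipZr !ip_indicator mulN1r. Qed.

Lemma simple_root_neq0 k : (0 < k <= n)%N -> simple_root R n k != 0.
Proof.
move=> kn; have k1n : (k.-1 < n)%N by lia.
apply/eqP => /rowP/(_ (Ordinal k1n)); rewrite simple_rootE // !mxE /= eqxx.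
have -> : (k.-1 == k) = false by apply/eqP; lia.
by rewrite subr0; apply/eqP; rewrite oner_eq0.
Qed.

Lemma ip_simple_coroot_gt0 (v : vec) k : (0 < k <= n)%N ->
  (0 < ip v (coroot (simple_root R n k))) = (coord v k < coord v k.-1).
Proof.
by move=> kn; rewrite ip_coroot_gt0 ?simple_root_neq0 // ip_simple_root // subr_gt0.
Qed.

End Coord.

Section Reflections.
Variables (R : realFieldType) (n : nat).
Local Notation vec := 'rV[R]_n.
Local Notation sgn s := ((-1) ^+ s : R).

Lemma ip_ev (k l : 'I_n) : ip (ev R k) (ev R l) = (k == l)%:R.
Proof. by rewrite ip_evr mxE eq_sym; case: (_ == _); rewrite ?mulr1n ?mulr0n. Qed.

Lemma ip_coroot_short (v : vec) (k : 'I_n) (s : bool) :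
  ip v (coroot (sgn s *: ev R k)) = 2 * (sgn s * v 0 k).
Proof.
rewrite /coroot ipZl ipZr ipZr ip_ev eqxx mulr1n mulr1 -expr2 sqrr_sign divr1.
by rewrite ipZr ip_evr.
Qed.

Lemma ip_coroot_long (v : vec) (k l : 'I_n) (s t : bool) : k != l ->
  ip v (coroot (sgn s *: ev R k + sgn t *: ev R l)) = sgn s * v 0 k + sgn t * v 0 l.
Proof.
move=> kl; rewrite /coroot.
have -> : ip (sgn s *: ev R k + sgn t *: ev R l) (sgn s *: ev R k + sgn t *: ev R l) = 2.
  rewrite !(ipDl, ipDr, ipZl, ipZr) !ip_ev !eqxx [l == k]eq_sym (negbTE kl).
  by rewrite mulr0n mulr1n !mulr0 addr0 add0r !mulr1 -!expr2 !sqrr_sign.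
by rewrite divff ?pnatr_eq0 // scale1r ipDr !ipZr !ip_evr.
Qed.

Lemma refl_short (v : vec) (k : 'I_n) (s : bool) m :
  refl (sgn s *: ev R k) v 0 m = if m == k then - v 0 k else v 0 m.
Proof.
rewrite /refl ip_coroot_short !mxE; case: eqP => [->|_]; last by rewrite !mulr0 subr0.
by rewrite mulr1 -mulrA mulrAC -expr2 sqrr_sign mul1r mulr_natl mulr2n opprD addrA subrr sub0r.
Qed.

Lemma refl_long (v : vec) (k l : 'I_n) (s t : bool) m : k != l ->
  refl (sgn s *: ev R k + sgn t *: ev R l) v 0 m =
  if m == k then - (sgn s * sgn t) * v 0 l
  else if m == l then - (sgn s * sgn t) * v 0 k else v 0 m.
Proof.
move=> kl; rewrite /refl ip_coroot_long // !mxE.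
have [->|mk] := eqVneq m k; first by rewrite (negbTE kl); case: s; case: t; ring.
have [->|ml] := eqVneq m l; first by case: s; case: t; ring.
by rewrite !mulr0 addr0 mulr0 subr0.
Qed.

Lemma refl_sqr_perm (v a : vec) : rootB a ->
  exists p : 'S_n, forall m, refl a v 0 m ^+ 2 = v 0 (p m) ^+ 2.
Proof.
have sqr_sign2 s t x : (- (sgn s * sgn t) * x) ^+ 2 = x ^+ 2.
  by rewrite exprMn sqrrN exprMn !sqrr_sign !mul1r.
case=> [[k [l [s [t [kl ->]]]]] | [k [s ->]]].
  exists (tperm k l) => m; rewrite refl_long //.
  case: tpermP => [->|->|/eqP/negbTE mk /eqP/negbTE ml]; rewrite ?eqxx ?sqr_sign2 //.
    by rewrite eq_sym (negbTE kl) sqr_sign2.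
  by rewrite mk ml.
exists 1%g => m; rewrite refl_short perm1.
by case: eqP => [->|]; rewrite ?sqrrN.
Qed.

Lemma orbit_sqr_perm (lam mu : vec) : in_orbit lam mu ->
  exists p : 'S_n, forall m, mu 0 m ^+ 2 = lam 0 (p m) ^+ 2.
Proof.
case=> s [rs ->]; elim: s rs => [|a s IHs] rs /=.
  by exists 1%g => m; rewrite perm1.
have [p pE] := IHs (fun b bs => rs b (mem_behead (s := a :: s) bs)).
have [q qE] := refl_sqr_perm (foldr (@refl R n) lam s) (rs a (mem_head a s)).
by exists (q * p)%g => m; rewrite qE pE permM.
Qed.

End Reflections.

Definition is_sign (z : int) : bool := -1 <= z <= 1.

(* Positivity of the pairings with the simple coroots alpha_k^vee, k <> i, for the
   weight with sign vector s; for k = size s the junk value s`_k = 0 of nth makes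
   this the condition s_n > 0 coming from alpha_n = e_n. *)
Definition admissible (i : nat) (s : seq int) : bool :=
  all is_sign s && all (fun k => (k == i) || (s`_k < s`_k.-1)) (iota 1 (size s)).

Fixpoint sign_seqs (N : nat) : seq (seq int) :=
  if N is N'.+1 then [seq z :: t | z <- [:: -1; 0; 1], t <- sign_seqs N'] else [:: [::]].

Lemma mem_sign_seqs s : all is_sign s -> s \in sign_seqs (size s).
Proof.
elim: s => [|z s IHs] // /andP[zs /IHs ss]; apply: allpairs_f => //.
by rewrite !inE; move: zs; rewrite /is_sign; lia.
Qed.

Lemma admissible_size i s : admissible i s -> (size s <= 4)%N.
Proof.
case/andP=> /all_nthP sg /allP desc; rewrite leqNgt; apply/negP => s5.
have sgk k : -1 <= s`_k <= 1.
  by case: (ltnP k (size s)) => [/sg|/(nth_default 0)->//]; apply.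
have descP k : (0 < k <= size s)%N -> k != i -> s`_k < s`_k.-1.
  by move=> kN ki; move: (desc k); rewrite mem_iota (negbTE ki); apply; lia.
have sN : s`_(size s) = 0 by rewrite nth_default.
have := sgk (size s).-1; have := sgk (size s).-2; have := sgk 0%N; have := sgk 1%N;
have := sgk 2%N; have := sgk 3%N.
(* i <= 3: then s_(N-2) > s_(N-1) > s_N = 0; i > 3: then s_0 > s_1 > s_2 > s_3 *)
case: (leqP i 3) => i3.
  have := descP (size s) ltac:(lia) ltac:(apply/eqP; lia).
  have := descP (size s).-1 ltac:(lia) ltac:(apply/eqP; lia).
  rewrite sN /=; lia.
have := descP 1%N ltac:(lia) ltac:(apply/eqP; lia).
have := descP 2%N ltac:(lia) ltac:(apply/eqP; lia).
have := descP 3%N ltac:(lia) ltac:(apply/eqP; lia).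
rewrite /=; lia.
Qed.

(* The table of the theorem as triples (i, j, s), with n = size s; the listed
   weight is s if s has a zero entry, and s / 2 otherwise (see [basic_vector]). *)
Definition basic_signs : seq (nat * nat * seq int) :=
  [:: (1, 1, [:: 0; 1]%Z); (1, 2, [:: 1; 1]%Z); (1, 2, [:: -1; 1]%Z);
      (2, 1, [:: 1; 0]%Z); (2, 1, [:: 0; -1]%Z); (2, 2, [:: 1; -1]%Z);
      (2, 2, [:: 1; 0; 1]%Z); (2, 2, [:: 0; -1; 1]%Z); (2, 3, [:: 1; -1; 1]%Z);
      (3, 2, [:: 1; 0; -1]%Z); (3, 3, [:: 1; 0; -1; 1]%Z)]%N.

Lemma admissible_basic i s : (2 <= size s)%N -> (0 < i <= size s)%N -> admissible i s ->
  (i, count (fun z => z != 0) s, s) \in basic_signs.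
Proof.
move=> s2 si adm; have s4 := admissible_size adm.
have table : all (fun N => all (fun t => all (fun i =>
    admissible i t ==> ((i, count (fun z => z != 0) t, t) \in basic_signs))
    (iota 1 N)) (sign_seqs N)) [:: 2; 3; 4]%N.
  by vm_compute.
have size_s : size s \in [:: 2; 3; 4]%N by rewrite !inE; lia.
have /allP/(_ s (mem_sign_seqs (proj1 (andP adm)))) := allP table _ size_s.
have i_s : i \in iota 1 (size s) by rewrite mem_iota; lia.
by move=> /allP/(_ i i_s)/implyP; apply.
Qed.

Section DominantWeight.
Variable R : realFieldType.

Lemma step_profile (y : nat -> R) n j : (0 < j <= n)%N ->
  (forall k, (0 < k <= n)%N -> k != j -> y k = y k.-1) ->
  forall k, (k <= n)%N -> y k = if (k < j)%N then y 0%N else y n.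
Proof.
move=> jn flat k kn; case: ltnP => [kj|jk].
  elim: k kj {kn} => [//|k IHk] kj.
  have -> : y k.+1 = y k by apply: flat; [lia | apply/eqP; lia].
  by apply: IHk; lia.
have above d : (j <= n - d)%N -> y (n - d)%N = y n.
  elim: d => [|d IHd] jd; first by rewrite subn0.
  rewrite -IHd; last by lia.
  have -> : (n - d = (n - d.+1).+1)%N by lia.
  by symmetry; apply: flat; [lia | apply/eqP; lia].
by rewrite -(subKn kn); apply: above; rewrite subKn.
Qed.

Lemma dominant_profile n j (mu : 'rV[R]_n) : (0 < j <= n)%N -> dominant mu ->
  (forall k, (1 <= k <= n)%N -> ip mu (simple_root R n k) = 0 <-> k != j) ->
  exists2 a, 0 < a & forall k, coord mu k = if (k < j)%N then a else 0.
Proof.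
move=> jn dom zeros.
have flat k : (0 < k <= n)%N -> k != j -> coord mu k = coord mu k.-1.
  move=> kn kj; apply/eqP; rewrite eq_sym -subr_eq0 -ip_simple_root //.
  exact/eqP/(zeros k kn).
have muE := step_profile jn flat; rewrite (coord_default mu (leqnn n)) in muE.
have muE' k : coord mu k = if (k < j)%N then coord mu 0 else 0.
  by case: (leqP k n) => [/muE //|nk]; rewrite coord_default ?ifN //; lia.
exists (coord mu 0) => //.
have nz : ip mu (simple_root R n j) != 0 by apply/eqP => /(zeros j jn); rewrite eqxx.
have := dom j jn; rewrite le_eqVlt eq_sym (negbTE nz) ip_simple_root //.
by rewrite (muE' j.-1) (muE' j) ltnn subr0 ifT //; lia.
Qed.

End DominantWeight.

Lemma sgz_scale_of_sqr (R : realFieldType) (x a : R) (b : bool) : 0 < a ->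
  x ^+ 2 = (if b then a else 0) ^+ 2 -> x = (sgz x)%:~R * a.
Proof.
move=> a0; case: b => /eqP; last by rewrite expr0n sqrf_eq0 => /eqP->; rewrite sgz0 mul0r.
rewrite eqf_sqr => /orP[] /eqP ->; first by rewrite gtr0_sgz // mul1r.
by rewrite sgzN gtr0_sgz // mulNr mul1r.
Qed.

Section SignSequence.
Variables (R : realFieldType) (n : nat).
Local Notation vec := 'rV[R]_n.

Definition sign_seq (v : vec) : seq int := mkseq (fun k => sgz (coord v k)) n.

Lemma size_sign_seq v : size (sign_seq v) = n.
Proof. exact: size_mkseq. Qed.

Lemma nth_sign_seq v k : (sign_seq v)`_k = sgz (coord v k).
Proof.
have [kn|nk] := ltnP k n; first by rewrite nth_mkseq.
by rewrite nth_default ?size_sign_seq // coord_default // sgz0.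
Qed.

Lemma all_sign_seq v : all is_sign (sign_seq v).
Proof. by apply/allP => z /mapP[k _ ->]; rewrite /is_sign; case: sgzP. Qed.

Lemma count_sign_seq v :
  count (fun z => z != 0) (sign_seq v) = \sum_(k < n | v 0 k != 0) 1%N.
Proof.
rewrite -sum1_count /sign_seq /mkseq -val_enum_ord -map_comp big_map big_enum_cond /=.
by apply: eq_bigl => k; rewrite coord_ord sgz_eq0.
Qed.

Section OrbitOfDominant.
Variables (lam mu : vec) (a : R) (j : nat).
Hypotheses (orb : in_orbit lam mu) (a_gt0 : 0 < a).
Hypothesis muE : forall k, coord mu k = if (k < j)%N then a else 0.

Lemma coord_orbit_dominant k : coord lam k = ((sign_seq lam)`_k)%:~R * a.
Proof.
rewrite nth_sign_seq; have [kn|nk] := ltnP k n; last by rewrite coord_default // sgz0 mul0r.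
have [p sq] := orbit_sqr_perm orb.
set m := Ordinal kn; apply: (sgz_scale_of_sqr (b := ((p^-1)%g m < j)%N) a_gt0).
by rewrite -[k]/(val m) coord_ord -{1}(permKV p m) -sq -coord_ord muE.
Qed.

Lemma count_orbit_dominant : (j <= n)%N -> count (fun z => z != 0) (sign_seq lam) = j.
Proof.
move=> jn; have [p sq] := orbit_sqr_perm orb.
rewrite count_sign_seq (reindex_inj (@perm_inj _ p)) /=.
transitivity (\sum_(k < n | (k < j)%N) 1)%N.
  apply: eq_bigl => k; rewrite -sqrf_eq0 -sq sqrf_eq0 -coord_ord muE.
  by case: ifP; rewrite ?eqxx // gt_eqF.
by rewrite -(big_ord_widen _ (fun=> 1%N) jn) sum1_card card_ord.
Qed.

End OrbitOfDominant.
End SignSequence.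

Definition basic_vector (R : realFieldType) (s : seq int) : seq R :=
  [seq z%:~R / (if 0 \in s then 1 else 2) | z <- s].

Lemma listedB_basic_signs (R : realFieldType) (i : nat) (s : seq int) :
  (i, count (fun z => z != 0) s, s) \in basic_signs ->
  @listedB R (size s) i (count (fun z => z != 0) s) (vec_of (size s) (basic_vector R s)).
Proof.
rewrite !inE; do ![case/orP=> [|]]; move/eqP=> [-> _ ->]; rewrite /listedB /basic_vector /=;
  rewrite ?(mulr0z, mulr1z, mulrN1z, divr1, mul0r, div1r, mulN1r);
  repeat first [by split | by left; split | by left; split; [|left] |
                by left; split; [|right] | right].
Qed.

Lemma is_int_gt0_nat (R : realFieldType) (x : R) :
  is_int x -> 0 < x -> exists2 c : nat, (0 < c)%N & c%:R = x.
Proof.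
case=> [[c|c] ->]; first by rewrite -pmulrn ltr0n => c0; exists c.
by rewrite NegzE intrN -pmulrn oppr_gt0 ltrn0.
Qed.

Lemma is_int_unit_mul (R : realFieldType) (z : int) (x : R) :
  z ^+ 2 = 1 -> is_int (z%:~R * x) -> is_int x.
Proof.
move=> z2 [m e]; exists (z * m).
by rewrite intrM -e mulrA -intrM -expr2 z2 mulr1z mul1r.
Qed.

Section Integrality.
Variables (R : realFieldType) (n : nat).
Local Notation vec := 'rV[R]_n.

Lemma admissible_sign_seq (lam : vec) a i : 0 < a ->
  (forall k, coord lam k = ((sign_seq lam)`_k)%:~R * a) ->
  (forall k, (1 <= k <= n)%N -> k != i -> 0 < ip lam (coroot (simple_root R n k))) ->
  admissible i (sign_seq lam).
Proof.
move=> a0 lamE pos; rewrite /admissible all_sign_seq; apply/allP => k.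
rewrite mem_iota size_sign_seq => kn; have [//|ki] := eqVneq k i.
have := pos k ltac:(lia) ki.
by rewrite ip_simple_coroot_gt0; [rewrite !lamE ltr_pM2r // ltr_int | lia].
Qed.

Lemma integral_scale (lam : vec) a : integral lam -> 0 < a ->
  (forall k, coord lam k = ((sign_seq lam)`_k)%:~R * a) ->
  has (fun z => z != 0) (sign_seq lam) ->
  exists2 c : nat, (0 < c)%N & c%:R = (if 0 \in sign_seq lam then 1 else 2) * a.
Proof.
move=> int_lam a0 lamE /(has_nthP 0)[k]; rewrite size_sign_seq => kn nz_k.
have unit_k : (sign_seq lam)`_k ^+ 2 = 1.
  by move: nz_k; rewrite nth_sign_seq sgz_eq0 => /sgz_odd->; rewrite expr0.
set K := Ordinal kn.
have lamK : lam 0 K = ((sign_seq lam)`_k)%:~R * a by rewrite -coord_ord lamE.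
have root_short : rootB ((-1) ^+ false *: ev R K) by right; exists K, false.
have /(is_int_unit_mul unit_k) int_2a : is_int (((sign_seq lam)`_k)%:~R * (2 * a)).
  by have := int_lam _ root_short; rewrite ip_coroot_short expr0 mul1r lamK mulrCA.
case: ifP => [/(nthP 0)[l] | _]; last by apply: is_int_gt0_nat; rewrite ?mulr_gt0.
rewrite size_sign_seq => ln zero_l; set L := Ordinal ln.
have KL : K != L by apply: contraNneq nz_k => -[->]; rewrite zero_l.
have root_long : rootB ((-1) ^+ false *: ev R K + (-1) ^+ false *: ev R L).
  by left; exists K, L, false, false.
have /(is_int_unit_mul unit_k) int_a : is_int (((sign_seq lam)`_k)%:~R * a).
  have := int_lam _ root_long; rewrite ip_coroot_long // expr0 !mul1r lamK.
  by rewrite -coord_ord lamE zero_l mul0r addr0.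
by rewrite mul1r; apply: is_int_gt0_nat.
Qed.

End Integrality.

Theorem theorem5p8 (R : realFieldType) (n i j : nat) (lam : 'rV[R]_n) :
  (2 <= n)%N -> (1 <= i <= n)%N -> (1 <= j <= n)%N ->
  @basic_system R n i j ->
  @basic_weight R n i j lam ->
  exists (c : nat) (mu : 'rV[R]_n),
    (0 < c)%N /\ @listedB R n i j mu /\ lam = c%:R *: mu.
Proof.
move=> n2 i_n j_n _ [int_lam [pos_lam [mu [orb [dom zeros]]]]].
have [a a0 muE] := dominant_profile j_n dom zeros.
have lamE := coord_orbit_dominant orb a0 muE.
have count_s := count_orbit_dominant orb a0 muE (proj2 (andP j_n)).
have adm : admissible i (sign_seq lam).
  apply: admissible_sign_seq a0 lamE _ => k k_n k_i.
  by have [m [m0 ->]] := pos_lam k k_n k_i; rewrite ltr0n.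
have basic : (i, count (fun z => z != 0) (sign_seq lam), sign_seq lam) \in basic_signs.
  by apply: admissible_basic adm; rewrite size_sign_seq.
have [c c0 cE] := integral_scale int_lam a0 lamE ltac:(by rewrite has_count count_s; lia).
exists c, (vec_of n (basic_vector R (sign_seq lam))); split => //; split.
  by have := listedB_basic_signs R basic; rewrite size_sign_seq count_s.
apply/rowP => k; rewrite !mxE (nth_map 0) ?size_sign_seq // -coord_ord lamE cE.
by case: ifP => _; field.
Qed.
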